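(* Let $n\geq 2$ be an integer. The ring $\mathrm{Mat}_n(\mathbb{Z})$ of $n\times n$ integer matrices has the presentation (as a unital associative ring) with two generators $x,y$ and three relations $$\mathrm{Mat}_n(\mathbb{Z}) \cong \langle x,y \mid x^n = 0,\ y^n=0,\ xy + y^{n-1}x^{n-1} = 1 \rangle.$$ That is, the quotient of the free unital associative ring $\mathbb{Z}\langle x,y\rangle$ by the two-sided ideal generated by $x^n$, $y^n$ and $xy + y^{n-1}x^{n-1} - 1$ is isomorphic to $\mathrm{Mat}_n(\mathbb{Z})$.
   Context: All rings are associative with unit, and presentations are taken in the category of unital associative rings. *)

From HB Require Import structures.
From mathcomp Require Import all_boot all_order all_algebra.
Set Implicit Arguments. Unset Strict Implicit. Unset Printing Implicit Defensive.
Import GRing.Theory.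
Local Open Scope ring_scope.

Definition mat_rels (R : pzRingType) (n : nat) (x y : R) : Prop :=
  [/\ x ^+ n = 0, y ^+ n = 0 & x * y + y ^+ n.-1 * x ^+ n.-1 = 1].

(* This is the
   universal property characterizing  Z<x,y> / (x^n, y^n, xy + y^(n-1)x^(n-1) - 1)
   (via x |-> X, y |-> Y) up to isomorphism. *)
Definition presented_by (A : pzRingType) (n : nat) (X Y : A) : Prop :=
  @mat_rels _ n X Y /\
  forall (R : pzRingType) (a b : R), @mat_rels _ n a b ->
    (exists f : {rmorphism A -> R}, f X = a /\ f Y = b) /\
    (forall f g : {rmorphism A -> R},
        f X = a -> f Y = b -> g X = a -> g Y = b -> f =1 g).

(* In a ring with a^(m+1) = b^(m+1) = 0 and ab + b^m a^m = 1, put p = b^m a^m,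
   so that pa = bp = 0.  Telescoping gives a^k b^k = 1 - sum_(i<k) a^i p b^i,
   hence sum_(i<=m) a^i p b^i = 1 and b^i a^i p = p = p b^i a^i for i <= m:
   the e_ij = a^i p b^j (i, j <= m) are a complete system of matrix units, so
   M |-> sum M_ij e_ij is a ring morphism Mat_(m+1)(Z) -> R.  It sends the
   lower and upper shift matrices x, y to a and b, and it is the only such
   morphism because E_ij = x^i (y^m x^m) y^j. *)

From HB Require Import structures.
From mathcomp Require Import all_boot all_order all_algebra.
From mathcomp Require Import zify.
Set Implicit Arguments. Unset Strict Implicit. Unset Printing Implicit Defensive.
Import GRing.Theory.
Local Open Scope ring_scope.

Lemma sum_ord_mulrb (V : nmodType) n k (F : nat -> V) :
  \sum_(q < n) F q *+ (q == k :> nat) = F k *+ (k < n)%N.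
Proof.
by rewrite (eq_bigr _ (fun q _ => mulrb _ _)) -big_mkcond big_ord1_eq mulrb.
Qed.

Lemma sum_ord_mulrb_add (V : nmodType) n r k (F : nat -> V) : (r < n)%N ->
  \sum_(q < n) F q *+ (r == q + k)%N = F (r - k)%N *+ (k <= r)%N.
Proof.
move=> lt_rn.
have lt_rkn : (r - k < n)%N by rewrite (leq_ltn_trans (leq_subr k r)).
under eq_bigr => q _.
  rewrite (_ : (r == q + k)%N = ((q : nat) == r - k)%N && (k <= r)%N); last by lia.
  rewrite -mulnb mulrnA; over.
by rewrite sumrMnl sum_ord_mulrb lt_rkn.
Qed.

Lemma natr_mulrb (R : pzSemiRingType) (b c : bool) : b%:R *+ c = (b && c)%:R :> R.
Proof. by case: b; case: c. Qed.

Lemma trmxX (R : comPzRingType) n (A : 'M[R]_n) k : (A ^+ k)^T = A^T ^+ k.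
Proof.
elim: k => [|k IHk]; first by rewrite !expr0 trmx1.
by rewrite exprS -mulmxE trmx_mul IHk mulmxE -exprSr.
Qed.

Section MatrixUnits.
Variables (R : pzRingType) (n : nat) (e : 'I_n -> 'I_n -> R).
Hypotheses (e_mul : forall i j k l, e i j * e k l = if j == k then e i l else 0)
  (e_sum : \sum_i e i i = 1).

Definition mx_eval (M : 'M[int]_n) : R := \sum_i \sum_j e i j *~ M i j.

Lemma mx_eval_is_zmod_morphism : zmod_morphism mx_eval.
Proof.
move=> M N; rewrite /mx_eval -sumrB; apply: eq_bigr => i _.
by rewrite -sumrB; apply: eq_bigr => j _; rewrite !mxE mulrzBr.
Qed.

Lemma mx_eval1 : mx_eval 1 = 1.
Proof.
rewrite -e_sum; apply: eq_bigr => i _; rewrite (bigD1 i) //= big1 ?addr0.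
  by rewrite mxE eqxx mulr1z.
by move=> j ji; rewrite mxE eq_sym (negbTE ji) mulr0z.
Qed.

Lemma mx_evalM M N : mx_eval (M * N) = mx_eval M * mx_eval N.
Proof.
rewrite /mx_eval mulr_suml; apply: eq_bigr => i _; rewrite mulr_suml.
transitivity (\sum_j \sum_l e i l *~ (M i j * N j l)).
  by rewrite exchange_big; apply: eq_bigr => l _; rewrite -mulmxE mxE mulrz_sumr.
apply: eq_bigr => j _.
rewrite mulr_sumr [RHS](bigD1 j) //= [X in _ + X]big1 => [|k kj].
  rewrite addr0 mulr_sumr; apply: eq_bigr => l _.
  by rewrite mulrzAl mulrzAr e_mul eqxx -mulrzA mulrC.
rewrite mulr_sumr big1 // => l _.
by rewrite mulrzAl mulrzAr e_mul eq_sym (negbTE kj) !mul0rz.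
Qed.

Definition mx_eval_rmorphism : {rmorphism 'M[int]_n -> R} :=
  HB.pack_for {rmorphism 'M[int]_n -> R} mx_eval
    (GRing.isZmodMorphism.Build _ _ mx_eval mx_eval_is_zmod_morphism)
    (GRing.isMonoidMorphism.Build _ _ mx_eval (conj mx_eval1 mx_evalM)).

Lemma eq_mx_eval (h : {additive 'M[int]_n -> R}) :
  (forall i j, h (delta_mx i j) = e i j) -> h =1 mx_eval.
Proof.
move=> h_delta M; rewrite {1}(matrix_sum_delta M) raddf_sum.
apply: eq_bigr => i _; rewrite raddf_sum; apply: eq_bigr => j _.
by rewrite -[M i j in LHS]intz scaler_int raddfMz h_delta.
Qed.

End MatrixUnits.

Section CornerUnits.
Variables (R : pzRingType) (m : nat) (a b : R).
Hypotheses (a_nil : a ^+ m.+1 = 0) (b_nil : b ^+ m.+1 = 0)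
  (ab_rel : a * b + b ^+ m * a ^+ m = 1).

Definition corner : R := b ^+ m * a ^+ m.
Definition corner_unit (i j : nat) : R := a ^+ i * corner * b ^+ j.

Lemma corner_mul_a : corner * a = 0.
Proof. by rewrite /corner -mulrA -exprSr a_nil mulr0. Qed.

Lemma b_mul_corner : b * corner = 0.
Proof. by rewrite /corner mulrA -exprS b_nil mul0r. Qed.

Lemma exprab_sum k : a ^+ k * b ^+ k = 1 - \sum_(i < k) corner_unit i i.
Proof.
elim: k => [|k IHk]; first by rewrite !expr0 mulr1 big_ord0 subr0.
have ab : a * b = 1 - corner by rewrite -ab_rel addrK.
rewrite exprSr exprS mulrA -(mulrA _ a) ab mulrBr mulr1 mulrBl -mulrA IHk.
by rewrite big_ord_recr /= opprD addrA /corner_unit mulrA.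
Qed.

Lemma sum_corner_units : \sum_(i < m.+1) corner_unit i i = 1.
Proof. by apply/esym/subr0_eq; rewrite -exprab_sum a_nil mul0r. Qed.

Lemma exprba_corner i : (i <= m)%N -> b ^+ i * a ^+ i * corner = corner.
Proof.
elim/ltn_ind: i => i IHi le_im.
have b_sum0 : b ^+ i * \sum_(l < i) corner_unit l l = 0.
  rewrite mulr_sumr big1 // => -[l lt_li] _ /=.
  have -> : b ^+ i * corner_unit l l
      = b ^+ (i - l).-1 * (b * (b ^+ l * a ^+ l * corner)) * b ^+ l.
    rewrite /corner_unit !mulrA -exprSr -exprD prednK ?subn_gt0 //.
    by rewrite subnK ?(ltnW lt_li).
  by rewrite IHi ?(leq_trans (ltnW lt_li)) // b_mul_corner mulr0 mul0r.
have bm : b ^+ m = b ^+ i * b ^+ (m - i) by rewrite -exprD subnKC.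
rewrite [in LHS]/corner bm !mulrA -(mulrA _ (a ^+ i)) exprab_sum.
by rewrite mulrBr mulr1 mulrBl b_sum0 !mul0r subr0 /corner bm.
Qed.

Lemma corner_exprba i : (i <= m)%N -> corner * b ^+ i * a ^+ i = corner.
Proof.
elim/ltn_ind: i => i IHi le_im.
have sum_a0 : (\sum_(l < i) corner_unit l l) * a ^+ i = 0.
  rewrite mulr_suml big1 // => -[l lt_li] _ /=.
  have -> : corner_unit l l * a ^+ i
      = a ^+ l * (corner * b ^+ l * a ^+ l) * (a * a ^+ (i - l).-1).
    rewrite /corner_unit -exprS prednK ?subn_gt0 // !mulrA -!mulrA.
    by rewrite -exprD subnKC ?(ltnW lt_li).
  rewrite IHi ?(leq_trans (ltnW lt_li)) // mulrA -(mulrA _ corner).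
  by rewrite corner_mul_a mulr0 mul0r.
have am : a ^+ m = a ^+ (m - i) * a ^+ i by rewrite -exprD subnK.
rewrite [in LHS]/corner am -!mulrA (mulrA (a ^+ i)) exprab_sum.
by rewrite mulrBl mul1r sum_a0 subr0 /corner am !mulrA.
Qed.

Lemma corner_exprba_corner j k : (j <= m)%N -> (k <= m)%N ->
  corner * b ^+ j * a ^+ k * corner = if j == k then corner else 0.
Proof.
move=> le_jm le_km; case: (ltngtP j k) => [lt_jk|lt_kj|<-].
- rewrite -(subnKC lt_jk) exprD exprSr !mulrA corner_exprba //.
  by rewrite corner_mul_a !mul0r.
- rewrite -(subnK lt_kj) exprD exprS -!mulrA (mulrA (b ^+ k)).
  by rewrite exprba_corner // b_mul_corner !mulr0.
- by rewrite corner_exprba // {2}/corner mulrA corner_exprba.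
Qed.

Lemma corner_unitM i j k l : (j <= m)%N -> (k <= m)%N ->
  corner_unit i j * corner_unit k l = if j == k then corner_unit i l else 0.
Proof.
move=> le_jm le_km.
have -> : corner_unit i j * corner_unit k l
    = a ^+ i * (corner * b ^+ j * a ^+ k * corner) * b ^+ l.
  by rewrite /corner_unit !mulrA.
by rewrite corner_exprba_corner //; case: eqP; rewrite ?mulr0 ?mul0r.
Qed.

Lemma a_mul_corner_unit i j : a * corner_unit i j = corner_unit i.+1 j.
Proof. by rewrite /corner_unit !mulrA -exprS. Qed.

Lemma corner_unit_mul_b i j : corner_unit i j * b = corner_unit i j.+1.
Proof. by rewrite /corner_unit -mulrA -exprSr. Qed.

Lemma corner_unit_overflowl j : corner_unit m.+1 j = 0.
Proof. by rewrite /corner_unit a_nil !mul0r. Qed.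

Lemma corner_unit_overflowr i : corner_unit i m.+1 = 0.
Proof. by rewrite /corner_unit b_nil mulr0. Qed.

End CornerUnits.

Section ShiftMatrix.
Variable n : nat.

Definition shift_mx k : 'M[int]_n := \matrix_(i, j) ((i : nat) == (j + k)%N)%:R.

Lemma shift_mx0 : shift_mx 0 = 1.
Proof. by apply/matrixP => i j; rewrite !mxE addn0. Qed.

Lemma shift_mx_overflow k : (n <= k)%N -> shift_mx k = 0.
Proof.
move=> le_nk; apply/matrixP => i j; rewrite !mxE.
by have := ltn_ord i; case: eqP => // ->; lia.
Qed.

Lemma shift_mxD k l : shift_mx k * shift_mx l = shift_mx (k + l).
Proof.
apply/matrixP => i j; rewrite -mulmxE !mxE.
under eq_bigr do rewrite !mxE mulr_natr.
rewrite (sum_ord_mulrb _ _ (fun q => ((i : nat) == (q + k)%N)%:R)) natr_mulrb.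
by congr (_%:R); have := ltn_ord i; lia.
Qed.

Lemma shift_mxX k : shift_mx 1 ^+ k = shift_mx k.
Proof.
by elim: k => [|k IHk]; rewrite ?expr0 ?shift_mx0 // exprS IHk shift_mxD.
Qed.

End ShiftMatrix.
Arguments shift_mx {n} k.

Section ShiftUnits.
Variable m : nat.
Implicit Types i j : 'I_m.+1.

Lemma trmx_shift_mul_shift :
  (shift_mx m)^T * shift_mx m = delta_mx 0 0 :> 'M_m.+1.
Proof.
apply/matrixP => r c; rewrite -mulmxE !mxE.
under eq_bigr do rewrite !mxE mulr_natr.
rewrite (sum_ord_mulrb _ _ (fun q => (q == (r + m)%N)%:R)) natr_mulrb -!val_eqE /=.
by congr (_%:R); have := ltn_ord r; lia.
Qed.

Lemma shift_mul_trmx_shift :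
  shift_mx 1 * (shift_mx 1)^T + delta_mx 0 0 = 1 :> 'M_m.+1.
Proof.
apply/matrixP => r c; rewrite -mulmxE !mxE.
under eq_bigr do rewrite !mxE mulr_natl.
rewrite (sum_ord_mulrb_add _ (fun q => ((c : nat) == (q + 1)%N)%:R)) ?ltn_ord //.
rewrite natr_mulrb -!val_eqE /= -natrD; congr (_%:R); lia.
Qed.

Lemma shift_mul_delta i j : shift_mx i * delta_mx 0 j = delta_mx i j.
Proof.
apply/matrixP => r c; rewrite -mulmxE !mxE.
under eq_bigr do rewrite !mxE mulr_natl -val_eqE /=.
rewrite (sum_ord_mulrb_add _ (fun q => ((q == 0%N) && (c == j))%:R)) ?ltn_ord //.
by rewrite natr_mulrb -val_eqE /= subn_eq0 andbAC -eqn_leq.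
Qed.

Lemma delta_mx_shift i j :
  delta_mx i j
  = shift_mx 1 ^+ i * ((shift_mx 1)^T ^+ m * shift_mx 1 ^+ m) * (shift_mx 1)^T ^+ j.
Proof.
rewrite -!trmxX !shift_mxX trmx_shift_mul_shift.
rewrite -(mul_delta_mx (0 : 'I_m.+1) i j) -[delta_mx 0 j]trmx_delta.
rewrite -shift_mul_delta -[delta_mx j 0]shift_mul_delta -mulmxE trmx_mul trmx_delta.
by rewrite mulmxA -(mulmxA _ (delta_mx 0 0)) mul_delta_mx.
Qed.

Lemma shift_mx_rels : mat_rels m.+1 (shift_mx 1 : 'M_m.+1) (shift_mx 1)^T.
Proof.
split; first by rewrite shift_mxX shift_mx_overflow.
  by rewrite -trmxX shift_mxX shift_mx_overflow ?trmx0.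
by rewrite /= -trmxX !shift_mxX trmx_shift_mul_shift shift_mul_trmx_shift.
Qed.

End ShiftUnits.

Section PresentationMorphism.
Variables (R : pzRingType) (m : nat) (a b : R).
Hypotheses (a_nil : a ^+ m.+1 = 0) (b_nil : b ^+ m.+1 = 0)
  (ab_rel : a * b + b ^+ m * a ^+ m = 1).

Local Notation e := (fun i j : 'I_m.+1 => corner_unit m a b i j).

Lemma corner_unit_ordM (i j k l : 'I_m.+1) :
  e i j * e k l = if j == k then e i l else 0.
Proof. exact: (corner_unitM a_nil b_nil ab_rel i l (ltn_ord j) (ltn_ord k)). Qed.

Lemma sum_corner_unit_ord : \sum_i e i i = 1.
Proof. exact: sum_corner_units. Qed.

Lemma mx_eval_shift : mx_eval e (shift_mx 1) = a.
Proof.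
rewrite /mx_eval exchange_big /=.
under eq_bigr => j _ do under eq_bigr => i _ do rewrite mxE mulrz_nat.
under eq_bigr => j _
  do rewrite (sum_ord_mulrb _ _ (fun i => corner_unit m a b i j)).
rewrite -[RHS]mulr1 -sum_corner_unit_ord mulr_sumr; apply: eq_bigr => j _.
rewrite a_mul_corner_unit addn1.
have [->|ne_jm] := eqVneq (j : nat) m; first by rewrite corner_unit_overflowl ?mul0rn.
by rewrite ltnS ltn_neqAle ne_jm -ltnS ltn_ord.
Qed.

Lemma mx_eval_trmx_shift : mx_eval e (shift_mx 1)^T = b.
Proof.
rewrite /mx_eval.
under eq_bigr => i _ do under eq_bigr => j _ do rewrite !mxE mulrz_nat.
under eq_bigr => i _
  do rewrite (sum_ord_mulrb _ _ (fun j => corner_unit m a b i j)).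
rewrite -[RHS]mul1r -sum_corner_unit_ord mulr_suml; apply: eq_bigr => i _.
rewrite corner_unit_mul_b addn1.
have [->|ne_im] := eqVneq (i : nat) m; first by rewrite corner_unit_overflowr ?mul0rn.
by rewrite ltnS ltn_neqAle ne_im -ltnS ltn_ord.
Qed.

Lemma rmorph_eq_mx_eval (h : {rmorphism 'M[int]_m.+1 -> R}) :
  h (shift_mx 1) = a -> h (shift_mx 1)^T = b -> h =1 mx_eval e.
Proof.
move=> hX hY; apply: eq_mx_eval => i j.
(* Restated at [h] itself: the goal only sees [h] as an additive map. *)
have h_delta : h (delta_mx i j) = corner_unit m a b i j.
  by rewrite delta_mx_shift !rmorphM !rmorphXn hX hY.
exact: h_delta.
Qed.

End PresentationMorphism.

Theorem theorem1 (n : nat) (hn : (2 <= n)%N) :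
  exists X Y : 'M[int]_n, @presented_by _ n X Y.
Proof.
case: n hn => [|m] // _; exists (shift_mx 1), (shift_mx 1)^T.
split=> [|R a b [a_nil b_nil ab_rel]]; first exact: shift_mx_rels.
split.
  exists (mx_eval_rmorphism (corner_unit_ordM a_nil b_nil ab_rel)
                             (sum_corner_unit_ord a_nil ab_rel)).
  by split; [exact: mx_eval_shift | exact: mx_eval_trmx_shift].
move=> f g fX fY gX gY M.
by rewrite (rmorph_eq_mx_eval fX fY) (rmorph_eq_mx_eval gX gY).
Qed.
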